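(* Let $\sigma$ be a permutation of length $m$ with exactly one descent and exactly $i$ adjacency pairs. Then the letter $m$ lies on the same side of the descent as the letter $1$ in $\sigma$ if and only if $m-i$ is odd.
   Context: A permutation of length $m$ is an arrangement $\sigma_1\cdots\sigma_m$ of $1,\dots,m$. A descent is an index $d$ with $\sigma_d>\sigma_{d+1}$; if $\sigma$ has exactly one descent at $d$, the positions $1,\dots,d$ are before the descent and $d+1,\dots,m$ after it, and two letters are on the same side of the descent if their positions are both $\le d$ or both $>d$. An adjacency pair is an index $j$ with $\sigma_{j+1}=\sigma_j+1$; the number of adjacency pairs is the number of such indices (so a run of $k$ consecutive increasing values in consecutive positions contributes $k-1$). *)

From mathcomp Require Import all_boot.
Set Implicit Arguments. Unset Strict Implicit. Unset Printing Implicit Defensive.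

Definition is_perm (m : nat) (s : seq nat) : bool := perm_eq s (iota 1 m).

Definition sig (s : seq nat) (k : nat) : nat := nth 0 s k.-1.

Definition descents (s : seq nat) : seq nat :=
  [seq d <- iota 1 (size s).-1 | sig s d > sig s d.+1].

Definition adj_pairs (s : seq nat) : nat :=
  count (fun j => sig s j.+1 == (sig s j).+1) (iota 1 (size s).-1).

Definition pos (s : seq nat) (a : nat) : nat := (index a s).+1.

Definition same_side (s : seq nat) (d a b : nat) : bool :=
  (pos s a <= d) == (pos s b <= d).

From mathcomp Require Import all_boot zify.

(* Both runs of a permutation with a single descent increase, so the letters v
   and v + 1 occupy consecutive positions exactly when they lie on the same side
   of the descent.  Hence exactly m - 1 - i of the steps v -> v + 1 (v < m) cross
   the descent, and the parity of that number tells whether 1 and m lie on the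
   same side. *)

Set Implicit Arguments.
Unset Strict Implicit.

Lemma sig_pos s v : v \in s -> sig s (pos s v) = v.
Proof. by move=> sv; rewrite /sig /pos nth_index. Qed.

Lemma pos_sig s j : uniq s -> 0 < j <= size s -> pos s (sig s j) = j.
Proof. by case: j => [|j] // uniq_s /andP[_ j_lt]; rewrite /sig /pos index_uniq. Qed.

Lemma sig_default s j : size s < j -> sig s j = 0.
Proof. by case: j => [|j] // lt_s; rewrite /sig nth_default. Qed.

Lemma map_sig_iota s : map (sig s) (iota 1 (size s)) = s.
Proof.
apply: (@eq_from_nth _ 0); first by rewrite size_map size_iota.
by move=> k; rewrite size_map size_iota => lt_k; rewrite (nth_map 0) ?size_iota ?nth_iota.
Qed.

Lemma odd_count_switches (b : nat -> bool) k n :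
  odd (count (fun v => b v != b v.+1) (iota k n)) = (b k != b (k + n)).
Proof.
elim: n k => [|n IHn] k; first by rewrite addn0 eqxx.
by rewrite /= oddD IHn addSnnS; case: (b k); case: (b k.+1); case: (b (k + n.+1)).
Qed.

Lemma sig_increasing_on s lo hi :
  (forall j, lo <= j < hi -> sig s j < sig s j.+1) ->
  {in [pred j | lo <= j <= hi] &, {homo sig s : a b / a < b}}.
Proof.
move=> step; apply: homo_ltn_in.
- by move=> y x z; apply: ltn_trans.
- by move=> a b; rewrite !inE => /andP[? ?] /andP[? ?] c /andP[? ?]; apply/andP; lia.
- by move=> j; rewrite !inE => /andP[lo_j _] /andP[_ j_lt]; apply: step; lia.
Qed.

Section Permutation.

Variables (m : nat) (s : seq nat).
Hypothesis perm_s : is_perm m s.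

Lemma size_perm : size s = m.
Proof. by rewrite (perm_size perm_s) size_iota. Qed.

Lemma uniq_perm : uniq s.
Proof. by rewrite (perm_uniq perm_s) iota_uniq. Qed.

Lemma mem_perm x : (x \in s) = (0 < x <= m).
Proof. by rewrite (perm_mem perm_s) mem_iota; congr (_ && _); lia. Qed.

Lemma pos_perm_bound x : x \in s -> 0 < pos s x <= m.
Proof. by move=> sx; rewrite /pos ltn0Sn -size_perm index_mem. Qed.

(* The adjacency pair at index j is counted through its letter v = sigma_j. *)
Lemma adj_pairs_letters :
  adj_pairs s = count (fun v => sig s (pos s v).+1 == v.+1) (iota 1 m.-1).
Proof.
have [m0|m_gt0] := posnP m; first by rewrite /adj_pairs size_perm m0.
set adj := fun v => sig s (pos s v).+1 == v.+1.
have adj_m : ~~ adj m.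
  rewrite /adj /sig /=; have [lt_pos|le_pos] := ltnP (pos s m) (size s).
    by apply/negP => /eqP sig_m; move: (mem_nth 0 lt_pos); rewrite sig_m mem_perm ltnn andbF.
  by rewrite nth_default.
have drop_last (P : pred nat) : ~~ P m -> count P (iota 1 m) = count P (iota 1 m.-1).
  move=> notPm; rewrite -{1}(prednK m_gt0) -[m.-1.+1]addn1 iotaD count_cat /= add1n prednK //.
  by rewrite (negbTE notPm) !addn0.
rewrite /adj_pairs size_perm -drop_last; last by rewrite (@sig_default s m.+1) ?size_perm.
rewrite (@eq_in_count _ _ (adj \o sig s)); last first.
  move=> j; rewrite mem_iota => /andP[j_gt0 j_lt] /=.
  by rewrite /adj pos_sig ?uniq_perm ?size_perm //; lia.
rewrite -count_map -size_perm map_sig_iota size_perm (permP perm_s).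
exact: drop_last.
Qed.

Section OneDescent.

Variable d : nat.
Hypothesis descents_s : descents s = [:: d].

Lemma descent_spec : 0 < d < m /\ sig s d.+1 < sig s d.
Proof.
have : d \in descents s by rewrite descents_s mem_head.
by rewrite mem_filter mem_iota size_perm => /andP[desc_d /andP[d_gt0 d_lt]]; split; first lia.
Qed.

Lemma sig_ascent j : 0 < j < m -> j != d -> sig s j < sig s j.+1.
Proof.
move=> /andP[j_gt0 j_lt] j_neq_d; rewrite ltn_neqAle; apply/andP; split.
  apply/eqP => /(congr1 (pos s)); rewrite !pos_sig ?uniq_perm ?size_perm; lia.
rewrite leqNgt; apply/negP => desc_j.
have : j \in descents s by rewrite mem_filter desc_j mem_iota size_perm; lia.
by rewrite descents_s inE (negbTE j_neq_d).
Qed.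

Lemma sig_increasing_run lo hi :
  0 < lo -> hi <= m -> (d < lo) || (hi <= d) ->
  {in [pred j | lo <= j <= hi] &, {homo sig s : a b / a < b}}.
Proof.
move=> lo_gt0 hi_le off_d; apply: sig_increasing_on => j /andP[lo_j j_hi].
by apply: sig_ascent; [|apply/eqP]; lia.
Qed.

Lemma sig_lt_same_side a b :
  0 < a -> a < b -> b <= m -> (a <= d) = (b <= d) -> sig s a < sig s b.
Proof.
move=> a_gt0 a_lt_b b_le same.
have off_d : (d < a) || (b <= d) by move: same; case: leqP; case: leqP.
by apply: (sig_increasing_run a_gt0 b_le off_d); rewrite ?inE; lia.
Qed.

(* Within an ascending run the letters v and v + 1 can only be neighbours,
   since any letter placed between them would lie strictly between v and v + 1. *)
Lemma adjacent_letters_same_side v :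
  0 < v < m -> (sig s (pos s v).+1 == v.+1) = same_side s d v v.+1.
Proof.
move=> /andP[v_gt0 v_lt]; have [_ desc_d] := descent_spec.
have s_v : v \in s by rewrite mem_perm; lia.
have s_v1 : v.+1 \in s by rewrite mem_perm; lia.
have /andP[p_gt0 p_le] := pos_perm_bound s_v.
have /andP[q_gt0 q_le] := pos_perm_bound s_v1.
have sig_p := sig_pos s_v; have sig_q := sig_pos s_v1.
rewrite /same_side; set p := pos s v in p_gt0 p_le sig_p *.
set q := pos s v.+1 in q_gt0 q_le sig_q *.
apply/eqP/eqP => [sig_p1|same].
  have p_lt : p < m.
    by rewrite ltnNge; apply/negP => le_p; move: sig_p1; rewrite sig_default ?size_perm.
  have -> : q = p.+1 by rewrite /q -sig_p1 pos_sig ?uniq_perm ?size_perm //; lia.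
  have [p_d|p_neq_d] := eqVneq p d; first by move: desc_d; rewrite -p_d sig_p1 sig_p; lia.
  by apply/idP/idP => ?; lia.
have side_between k : p <= k <= q -> (p <= d) = (k <= d).
  by move: same; case: (leqP p d); case: (leqP q d); case: (leqP k d); lia.
case: (ltngtP p q) => [p_lt_q|q_lt_p|p_q]; last by move: sig_q; rewrite -p_q sig_p; lia.
- have [q_p1|q_neq] := eqVneq q p.+1; first by rewrite -q_p1.
  have side_p1 : (p <= d) = (p.+1 <= d) by apply: side_between; lia.
  have lt_v : v < sig s p.+1 by rewrite -{1}sig_p; apply: sig_lt_same_side; lia.
  have lt_v1 : sig s p.+1 < v.+1.
    by rewrite -sig_q; apply: sig_lt_same_side; [lia|lia|lia|rewrite -side_p1].
  lia.
- by have := sig_lt_same_side q_gt0 q_lt_p p_le (esym same); rewrite sig_p sig_q; lia.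
Qed.

End OneDescent.

End Permutation.

Unset Implicit Arguments.

Theorem mainTheorem11 (m i d : nat) (s : seq nat) :
  is_perm m s -> descents s = [:: d] -> adj_pairs s = i ->
  same_side s d m 1 = odd (m - i).
Proof.
move=> perm_s desc_s <-{i}.
have [/andP[d_gt0 d_lt] _] := descent_spec perm_s desc_s.
set side := fun v => pos s v <= d.
have adj_side : adj_pairs s = count (fun v => side v == side v.+1) (iota 1 m.-1).
  rewrite (adj_pairs_letters perm_s); apply: eq_in_count => v; rewrite mem_iota => v_range.
  by apply: (adjacent_letters_same_side perm_s desc_s); lia.
have switches : count (fun v => side v != side v.+1) (iota 1 m.-1) = m.-1 - adj_pairs s.
  have := count_predC (fun v => side v == side v.+1) (iota 1 m.-1).
  by rewrite size_iota -adj_side => total; rewrite -[in RHS]total addKn.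
have adj_le : adj_pairs s <= m.-1 by rewrite adj_side -{2}(size_iota 1 m.-1) count_size.
have := odd_count_switches side 1 m.-1; rewrite switches add1n prednK; last lia.
rewrite /same_side -/(side m) -/(side 1) (_ : m - _ = (m.-1 - adj_pairs s).+1); last lia.
by rewrite /= => ->; case: (side 1); case: (side m).
Qed.
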